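(* There is a polynomial $p$ such that for all $\varepsilon,\eta\in(0,1]$, every finite nonempty set system $\mathcal{F}$ on a finite ground set $V$ has an $(\varepsilon,\eta)$-clustering with at most $2^{p(1/\varepsilon,1/\eta)}$ clusters.
   Context: Let $\mathcal{F}$ be a finite family of subsets of a finite set $V$. For $x\in V$, $\mathcal{F}_x$ is the set of members of $\mathcal{F}$ containing $x$, and $\mathcal{F}_{xy}=\mathcal{F}_x\cap\mathcal{F}_y$. For $\varepsilon\geq0$, $D_\varepsilon(x)=\{y\in V:|\mathcal{F}_{xy}|\leq\varepsilon|\mathcal{F}|\}$ and $D(x)=D_0(x)$. An $(\varepsilon,\eta)$-cluster is a set $X\subseteq V$ with $|D(x)\setminus D_\varepsilon(y)|\leq\eta|V|$ for all $x,y\in X$; an $(\varepsilon,\eta)$-clustering is a partition of $V$ into $(\varepsilon,\eta)$-clusters, and its size is the number of parts. *)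

From HB Require Import structures.
From mathcomp Require Import all_boot all_order all_algebra.
From mathcomp Require Import reals exp.
Set Implicit Arguments. Unset Strict Implicit. Unset Printing Implicit Defensive.
Import Order.TTheory GRing.Theory Num.Theory.
Local Open Scope ring_scope.

Section SetSystems.
Variables (R : realType) (V : finType) (F : {set {set V}}).

Definition famx (x : V) : {set {set V}} := [set A in F | x \in A].
Definition famxy (x y : V) : {set {set V}} := famx x :&: famx y.

Definition Deps (eps : R) (x : V) : {set V} :=
  [set y | (#|famxy x y|%:R : R) <= eps * #|F|%:R].
Definition D0 (x : V) : {set V} := Deps 0 x.

Definition is_cluster (eps eta : R) (X : {set V}) : Prop :=
  forall x y, x \in X -> y \in X ->
    (#|D0 x :\: Deps eps y|%:R : R) <= eta * #|V|%:R.

Definition is_clustering (eps eta : R) (P : {set {set V}}) : Prop :=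
  partition P [set: V] /\ forall X, X \in P -> is_cluster eps eta X.
End SetSystems.

(* Bivariate polynomial p(x, y) represented as p : {poly {poly R}},
   inner variable x, outer variable y. *)
Definition eval2 (R : realType) (p : {poly {poly R}}) (x y : R) : R :=
  (p.[y%:P]).[x].

From HB Require Import structures.
From mathcomp Require Import all_boot all_order all_algebra.
From mathcomp Require Import reals exp.
From mathcomp Require Import ring lra zify.
Import Order.TTheory GRing.Theory Num.Theory.
Local Open Scope ring_scope.
Set Implicit Arguments. Unset Strict Implicit. Unset Printing Implicit Defensive.

(* View a vertex x as the indicator vector g_x of the members of F containing
   it, in L^2 of the uniform probability on F, so that <g_x, g_z> = |F_xz|/|F|.
   An energy increment argument gives an orthonormal family u_1, ..., u_k,
   k <= N, such that for every y the residual of g_y has total squared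
   correlation at most |V|/N with the vectors g_z: otherwise the normalised
   residual can be added to the family, raising the energy
   \sum_z \sum_i <g_z, u_i>^2 <= |V| by more than |V|/N.  Vertices whose
   coordinates <g_y, u_i> agree after rounding to precision 1/T then have
   l^1-close rows in the Gram matrix, and such a class is an
   (eps, eta)-cluster because z \in D(x) \ D_eps(y) forces
   <g_y, g_z> - <g_x, g_z> > eps.  With K ~ 1/(eps eta), N = 16 K^2 and
   T = 64 K^3 there are at most (2T + 1)^N classes. *)

Section Dot.
Variables (R : rcfType) (I : finType) (S : {set I}).
Local Notation vec := {ffun I -> R^o}.

Definition dot (a b : vec) : R := (\sum_(i in S) a i * b i) / #|S|%:R.

Lemma dotC a b : dot a b = dot b a.
Proof. by rewrite /dot; congr (_ / _); apply: eq_bigr => i _; rewrite mulrC. Qed.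

Lemma dotDl a b c : dot (a + b) c = dot a c + dot b c.
Proof.
rewrite /dot -mulrDl -big_split /=; congr (_ / _).
by apply: eq_bigr => i _; rewrite ffunE mulrDl.
Qed.

Lemma dotZl k a c : dot (k *: a) c = k * dot a c.
Proof.
rewrite /dot mulrA mulr_sumr; congr (_ / _).
by apply: eq_bigr => i _; rewrite ffunE mulrA.
Qed.

Lemma dotBl a b c : dot (a - b) c = dot a c - dot b c.
Proof. by rewrite dotDl -scaleN1r dotZl mulN1r. Qed.

Lemma dotZr k a c : dot a (k *: c) = k * dot a c.
Proof. by rewrite dotC dotZl dotC. Qed.

Lemma dotBr a b c : dot a (b - c) = dot a b - dot a c.
Proof. by rewrite dotC dotBl !(dotC a). Qed.

Lemma dot_suml (T : Type) (r : seq T) (f : T -> vec) c :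
  dot (\sum_(t <- r) f t) c = \sum_(t <- r) dot (f t) c.
Proof.
elim: r => [|t r IH]; last by rewrite !big_cons dotDl IH.
by rewrite !big_nil /dot big1 ?mul0r // => i _; rewrite ffunE mul0r.
Qed.

Lemma dot_ge0 a : 0 <= dot a a.
Proof. by rewrite divr_ge0 // sumr_ge0 // => i _; rewrite -expr2 sqr_ge0. Qed.

Lemma dot_eq0_of_norm0 a c : dot a a = 0 -> dot a c = 0.
Proof.
have [S0|S0] := eqVneq #|S| 0%N; first by rewrite /dot S0 invr0 !mulr0.
move/eqP; rewrite mulf_eq0 invr_eq0 pnatr_eq0 (negbTE S0) orbF => /eqP a0.
have {}a0 i : i \in S -> a i * a i = 0.
  by apply: (psumr_eq0P _ a0) => j _; rewrite -expr2 sqr_ge0.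
by rewrite /dot big1 ?mul0r // => i /a0 /eqP; rewrite mulf_eq0 orbb => /eqP->; rewrite mul0r.
Qed.

Definition proj (L : seq vec) v : vec := \sum_(u <- L) dot v u *: u.
Definition resid (L : seq vec) v : vec := v - proj L v.

Fixpoint orthonormal_seq (L : seq vec) : Prop :=
  if L is u :: L' then
    [/\ dot u u = 1, forall u', u' \in L' -> dot u u' = 0 & orthonormal_seq L']
  else True.

Lemma orthonormal_norm L u : orthonormal_seq L -> u \in L -> dot u u = 1.
Proof.
elim: L => [|u0 L IH] //= [u0_1 _ oL]; rewrite in_cons.
by case/orP => [/eqP->|]; last exact: IH.
Qed.

Lemma dot_decomp L v c :
  dot v c = \sum_(u <- L) dot v u * dot u c + dot (resid L v) c.
Proof.
have -> : dot (resid L v) c = dot v c - \sum_(u <- L) dot v u * dot u c.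
  by rewrite dotBl dot_suml; congr (_ - _); apply: eq_bigr => u _; rewrite dotZl.
by rewrite addrC subrK.
Qed.

Lemma resid_orthonormal L v : orthonormal_seq L ->
  (forall u, u \in L -> dot (resid L v) u = 0) /\
  dot (resid L v) (resid L v) = dot v v - \sum_(u <- L) dot v u ^+ 2.
Proof.
elim: L => [|u L IH] /=.
  by move=> _; rewrite /resid /proj !big_nil !subr0.
case=> uu u_orth oL; have [IHorth IHnorm] := IH oL.
have -> : resid (u :: L) v = resid L v - dot v u *: u.
  by rewrite /resid /proj big_cons opprD addrA addrAC.
have wu : dot (resid L v) u = dot v u.
  rewrite (dot_decomp L v u) big_seq big1 ?add0r // => u' u'L.
  by rewrite (dotC u') u_orth // mulr0.
split=> [u' | ].
  rewrite in_cons dotBl dotZl => /orP[/eqP-> | u'L].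
    by rewrite wu uu mulr1 subrr.
  by rewrite IHorth // u_orth // mulr0 subr0.
rewrite big_cons; move: (resid L v) wu IHnorm => w wu wnorm.
by rewrite !dotBl !dotBr !dotZl !dotZr (dotC u w) wu uu wnorm; ring.
Qed.

Lemma bessel L v : orthonormal_seq L -> \sum_(u <- L) dot v u ^+ 2 <= dot v v.
Proof.
move=> oL; have [_ nw] := resid_orthonormal v oL.
by have := dot_ge0 (resid L v); rewrite nw subr_ge0.
Qed.

Lemma norm_dot_le1 L u v : orthonormal_seq L -> u \in L -> dot v v <= 1 ->
  `|dot v u| <= 1.
Proof.
move=> oL uL v1; have ou : orthonormal_seq [:: u] by split=> //; exact: orthonormal_norm uL.
have := bessel v ou; rewrite big_seq1 => vu.
by rewrite -(expr_le1 (n := 2)) // real_normK ?num_real //; lra.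
Qed.

End Dot.

Section EnergyIncrement.
Variables (R : rcfType) (I : finType) (S : {set I}) (V : finType).
Variable g : V -> {ffun I -> R^o}.
Hypothesis g_norm : forall z, dot S (g z) (g z) <= 1.
Local Notation dot := (dot S).
Local Notation resid := (resid S).
Local Notation orthonormal_seq := (orthonormal_seq S).

Definition energy L : R := \sum_(z : V) \sum_(u <- L) dot (g z) u ^+ 2.
Definition defect L y : R := \sum_(z : V) dot (resid L (g y)) (g z) ^+ 2.

Lemma energy_le_card L : orthonormal_seq L -> energy L <= #|V|%:R.
Proof.
move=> oL; rewrite -sumr_const /energy.
by apply: ler_sum => z _; apply: le_trans (bessel _ oL) (g_norm z).
Qed.

Lemma energy_increment L y : orthonormal_seq L -> 0 < defect L y ->
  exists u, orthonormal_seq (u :: L) /\ energy L + defect L y <= energy (u :: L).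
Proof.
move=> oL; have [w_orth w_norm] := resid_orthonormal (g y) oL.
rewrite /defect; move: (resid L (g y)) w_orth w_norm => w w_orth w_norm pos.
have w_le1 : dot w w <= 1.
  have := g_norm y; have : 0 <= \sum_(u <- L) dot (g y) u ^+ 2.
    by apply: sumr_ge0 => u _; exact: sqr_ge0.
  by rewrite w_norm; lra.
have w_gt0 : 0 < dot w w.
  rewrite lt_def dot_ge0 andbT; apply: contraTneq pos => w0.
  by rewrite big1 ?ltxx // => z _; rewrite dot_eq0_of_norm0 // expr0n.
set s := Num.sqrt (dot w w).
exists (s^-1 *: w); split.
  split=> [|u' u'L|//]; last by rewrite dotZl w_orth // mulr0.
  by rewrite dotZl dotZr mulrA -expr2 exprVn sqr_sqrtr ?ltW // mulVf // gt_eqF.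
have -> : energy (s^-1 *: w :: L) = energy L + (\sum_z dot w (g z) ^+ 2) / dot w w.
  rewrite /energy mulr_suml -big_split /=; apply: eq_bigr => z _.
  by rewrite big_cons addrC dotZr exprMn exprVn sqr_sqrtr ?ltW // mulrC dotC.
rewrite lerD2l ler_pdivlMr // ler_piMr //.
by apply: sumr_ge0 => z _; exact: sqr_ge0.
Qed.

Lemma small_defect_or_extend N L : (0 < N)%N -> orthonormal_seq L ->
  (size L)%:R * (#|V|%:R / N%:R) <= energy L ->
  (forall y, defect L y <= #|V|%:R / N%:R) \/
  exists u, [/\ orthonormal_seq (u :: L), (size L < N)%N &
                (size L).+1%:R * (#|V|%:R / N%:R) <= energy (u :: L)].
Proof.
move=> N_gt0 oL enL; set q := #|V|%:R / N%:R.
case: (boolP [forall y, defect L y <= q]) => [/forallP small | /forallPn [y]];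
  [by left | rewrite -ltNge => big; right].
have q_gt0 : 0 < q by rewrite divr_gt0 ?ltr0n //; apply/card_gt0P; exists y.
have [u [ou incr]] := energy_increment oL (lt_trans q_gt0 big).
have enu : (size L).+1%:R * q <= energy (u :: L).
  have {}enL : (size L)%:R * q <= energy L := enL.
  by rewrite -natr1 mulrDl mul1r; lra.
exists u; split=> //.
have : (size L).+1%:R * q <= N%:R * q.
  have -> : N%:R * q = #|V|%:R by rewrite /q mulrC divfK // pnatr_eq0 -lt0n.
  exact: le_trans enu (energy_le_card ou).
by rewrite ler_pM2r // ler_nat.
Qed.

Lemma exists_small_defect N : (0 < N)%N -> exists L,
  [/\ orthonormal_seq L, (size L <= N)%N & forall y, defect L y <= #|V|%:R / N%:R].
Proof.
move=> N_gt0.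
suff grow k L : orthonormal_seq L -> (N - size L <= k)%N -> (size L <= N)%N ->
    (size L)%:R * (#|V|%:R / N%:R) <= energy L -> exists L',
    [/\ orthonormal_seq L', (size L' <= N)%N & forall y, defect L' y <= #|V|%:R / N%:R].
  by apply: (grow N [::]); rewrite //= ?subn0 // mul0r /energy big1 // => z _; rewrite big_nil.
elim: k L => [|k IH] L oL k_bd L_bd enL;
  (have [small|[u [ou L_lt enu]]] := small_defect_or_extend N_gt0 oL enL; first by exists L).
  by move: k_bd L_lt; lia.
by apply: (IH (u :: L)) => //=; lia.
Qed.

End EnergyIncrement.

Lemma sum_norm_le_of_sum_sqr (R : realFieldType) (V : finType) (t : V -> R) s :
  0 < s -> \sum_(z : V) t z ^+ 2 <= s ^+ 2 * #|V|%:R ->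
  \sum_(z : V) `|t z| <= s * #|V|%:R.
Proof.
move=> s_gt0 sum_sqr.
have amgm : \sum_(z : V) 2 * s * `|t z| <= \sum_(z : V) (t z ^+ 2 + s ^+ 2).
  apply: ler_sum => z _; rewrite -real_normK ?num_real //.
  by have := sqr_ge0 (`|t z| - s); nra.
rewrite big_split /= sumr_const -mulr_sumr -mulr_natr in amgm.
by have := ler0n R #|V|; nra.
Qed.

Lemma card_preim_partition (T rT : finType) (f : T -> rT) (D : {set T}) :
  (#|preim_partition f D| <= #|rT|)%N.
Proof.
rewrite /preim_partition /equivalence_partition.
rewrite (imset_comp (fun k => [set y in D | k == f y]) f).
exact: leq_trans (leq_imset_card _ _) (max_card _).
Qed.

Section Quantization.
Variable R : realType.

Definition quant (T : nat) (a : R) : nat := Num.truncn ((a + 1) * T%:R).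

Lemma quant_le T a : `|a| <= 1 -> (quant T a <= 2 * T)%N.
Proof.
rewrite ler_norml => /andP[a_lb a_ub].
have x_ge0 : 0 <= (a + 1) * T%:R by rewrite mulr_ge0 ?ler0n //; lra.
have /andP[trunc_le _] := truncn_itv x_ge0.
rewrite -(ler_nat R) natrM; apply: le_trans trunc_le _.
by have := ler0n R T; nra.
Qed.

Lemma quant_close T a b : (0 < T)%N -> -1 <= a -> -1 <= b ->
  quant T a = quant T b -> `|a - b| <= T%:R^-1.
Proof.
rewrite /quant -(ltr0n R) => T_gt0 a_lb b_lb.
have xa : 0 <= (a + 1) * T%:R by apply: mulr_ge0; [lra | exact: ltW].
have xb : 0 <= (b + 1) * T%:R by apply: mulr_ge0; [lra | exact: ltW].
have /andP[ha1 ha2] := truncn_itv xa; have /andP[hb1 hb2] := truncn_itv xb.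
move=> eq_trunc; rewrite eq_trunc -natr1 in ha1 ha2; rewrite -natr1 in hb2.
rewrite -[T%:R^-1]mul1r ler_pdivlMr // -(ger0_norm (ltW T_gt0)) -normrM ler_norml.
by apply/andP; split; nra.
Qed.

End Quantization.

Section GramClustering.
Variables (R : realType) (I : finType) (S : {set I}) (V : finType).
Variable g : V -> {ffun I -> R^o}.
Hypothesis g_norm : forall z, dot S (g z) (g z) <= 1.
Local Notation vec := {ffun I -> R^o}.
Local Notation dot := (dot S).
Local Notation resid := (resid S).
Local Notation orthonormal_seq := (orthonormal_seq S).

Definition gram_dist (x y : V) : R :=
  \sum_(z : V) `|dot (g x) (g z) - dot (g y) (g z)|.

Definition coord_key (T : nat) (L : seq vec) (y : V) : {ffun 'I_(size L) -> 'I_(2 * T).+1} :=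
  [ffun i : 'I_(size L) => inord (quant T (dot (g y) L`_i))].

Lemma norm_dot_coord_le1 (L : seq vec) (i : 'I_(size L)) y : orthonormal_seq L ->
  `|dot (g y) L`_i| <= 1.
Proof. by move=> oL; apply: norm_dot_le1 oL (mem_nth 0 (ltn_ord i)) (g_norm y). Qed.

Lemma coord_key_close T L x y : (0 < T)%N -> orthonormal_seq L ->
  coord_key T L x = coord_key T L y ->
  forall i : 'I_(size L), `|dot (g x) L`_i - dot (g y) L`_i| <= T%:R^-1.
Proof.
move=> T_gt0 oL /ffunP eq_key i.
have bd z := norm_dot_coord_le1 i z oL.
have quant_bd z : (quant T (dot (g z) L`_i)%R < (2 * T).+1)%N by rewrite ltnS quant_le.
move: (eq_key i); rewrite !ffunE => /(congr1 val); rewrite /= !inordK //.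
by move/quant_close; apply=> //; [move: (bd x) | move: (bd y)]; rewrite ler_norml => /andP[].
Qed.

Lemma dot_diff_le L tau x y z : orthonormal_seq L -> 0 <= tau ->
  (forall i : 'I_(size L), `|dot (g x) L`_i - dot (g y) L`_i| <= tau) ->
  `|dot (g x) (g z) - dot (g y) (g z)| <=
    (size L)%:R * tau + `|dot (resid L (g x)) (g z)| + `|dot (resid L (g y)) (g z)|.
Proof.
move=> oL tau_ge0 close.
rewrite (dot_decomp S L (g x)) (dot_decomp S L (g y)) opprD addrACA -sumrB -addrA.
apply: le_trans (ler_normD _ _) _; apply: lerD; last exact: ler_normB.
apply: le_trans (ler_norm_sum _ _ _) _.
rewrite (big_nth 0) big_mkord.
apply: le_trans (_ : \sum_(i < size L) tau <= _); last by rewrite sumr_const card_ord mulr_natl.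
apply: ler_sum => i _; rewrite -mulrBl normrM -[tau]mulr1.
apply: ler_pM; rewrite ?normr_ge0 ?close //.
by rewrite dotC; apply: norm_dot_coord_le1.
Qed.

Lemma coord_key_gram_dist K L x y : (0 < K)%N -> orthonormal_seq L ->
  (size L <= 16 * K ^ 2)%N ->
  (forall y, defect S g L y <= #|V|%:R / (16 * K ^ 2)%:R) ->
  coord_key (64 * K ^ 3) L x = coord_key (64 * K ^ 3) L y ->
  gram_dist x y <= #|V|%:R / K%:R.
Proof.
move=> K_gt0 oL L_bd small_defect eq_key.
have k_gt0 : 0 < K%:R :> R by rewrite ltr0n.
(* Each of the three error terms of [dot_diff_le] sums to at most s |V|. *)
set s : R := (4 * K%:R)^-1.
have s_gt0 : 0 < s by rewrite invr_gt0 mulr_gt0.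
have s2 : #|V|%:R / (16 * K ^ 2)%:R = s ^+ 2 * #|V|%:R.
  by rewrite /s natrM natrX mulrC; congr (_ * _); field; rewrite lt0r_neq0.
have T_gt0 : (0 < 64 * K ^ 3)%N by rewrite muln_gt0 expn_gt0 K_gt0.
have tau_ge0 : 0 <= (64 * K ^ 3)%:R^-1 :> R by rewrite invr_ge0 ler0n.
have size_tau : (size L)%:R * (64 * K ^ 3)%:R^-1 <= s.
  have -> : s = (16 * K ^ 2)%:R * (64 * K ^ 3)%:R^-1.
    by rewrite /s [(16 * _)%:R]natrM [(64 * _)%:R]natrM !natrX; field; rewrite lt0r_neq0.
  by rewrite ler_wpM2r // ler_nat.
have resid_bd v : \sum_(z : V) `|dot (resid L (g v)) (g z)| <= s * #|V|%:R.
  by apply: sum_norm_le_of_sum_sqr => //; rewrite -s2; exact: small_defect.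
have close := coord_key_close T_gt0 oL eq_key.
apply: le_trans (ler_sum _ (fun z _ => dot_diff_le z oL tau_ge0 close)) _.
rewrite !big_split /= sumr_const -mulr_natr.
have := resid_bd x; have := resid_bd y; have := ler0n R #|V|.
have -> : #|V|%:R / K%:R = 4 * s * #|V|%:R by rewrite /s; field; rewrite lt0r_neq0.
nra.
Qed.

Lemma exists_gram_clustering K : (0 < K)%N ->
  exists P : {set {set V}}, [/\ partition P [set: V],
    forall X, X \in P -> forall x y, x \in X -> y \in X ->
      gram_dist x y <= #|V|%:R / K%:R &
    (#|P| <= 2 ^ ((128 * K ^ 3).+1 * (16 * K ^ 2)))%N].
Proof.
move=> K_gt0; have N_gt0 : (0 < 16 * K ^ 2)%N by rewrite muln_gt0 expn_gt0 K_gt0.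
have [L [oL L_bd small_defect]] := exists_small_defect g_norm N_gt0.
exists (preim_partition (coord_key (64 * K ^ 3) L) [set: V]); split.
- exact: preim_partitionP.
- move=> X /imsetP[x0 _ ->] x y; rewrite !inE => /eqP key_x /eqP key_y.
  by apply: (coord_key_gram_dist K_gt0 oL L_bd small_defect); rewrite -key_x -key_y.
apply: leq_trans (card_preim_partition _ _) _.
rewrite card_ffun !card_ord.
apply: leq_trans (leq_pexp2l _ L_bd) _; first by [].
rewrite [X in (_ <= X)%N]expnM leq_exp2r // mulnA.
exact: ltnW (ltn_expl _ (isT : (1 < 2)%N)).
Qed.

End GramClustering.

Section SetSystem.
Variables (R : realType) (V : finType) (F : {set {set V}}).

Definition incidence (x : V) : {ffun {set V} -> R^o} := [ffun A : {set V} => (x \in A)%:R].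

Lemma dot_incidence x z :
  dot F (incidence x) (incidence z) = #|famxy F x z|%:R / #|F|%:R.
Proof.
rewrite /dot; congr (_ / _); rewrite -sumr_const big_mkcond [RHS]big_mkcond.
apply: eq_bigr => A _; rewrite !inE !ffunE.
by case: (A \in F); case: (x \in A); case: (z \in A); rewrite /= ?mulr1 ?mul0r ?mulr0.
Qed.

Lemma dot_incidence_le1 z : dot F (incidence z) (incidence z) <= 1.
Proof.
rewrite dot_incidence; have [->|F_gt0] := posnP #|F|; first by rewrite invr0 mulr0.
rewrite ler_pdivrMr ?ltr0n // mul1r ler_nat subset_leq_card //.
by apply/subsetP => A; rewrite !inE => /andP[/andP[]].
Qed.

Lemma gram_dist_cluster eps eta x y : F != set0 -> 0 < eps ->
  gram_dist F incidence x y <= eps * eta * #|V|%:R ->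
  (#|D0 R F x :\: Deps F eps y|%:R : R) <= eta * #|V|%:R.
Proof.
move=> F_neq0 eps_gt0 dist_le.
have F_gt0 : 0 < #|F|%:R :> R by rewrite ltr0n card_gt0.
set B := D0 R F x :\: Deps F eps y.
set f := fun z => `|dot F (incidence x) (incidence z) - dot F (incidence y) (incidence z)|.
have far z : z \in B -> eps <= f z.
  rewrite !inE mul0r -ltNge => /andP[far_y near_x].
  have x_z0 : #|famxy F x z|%:R = 0 :> R by apply/eqP; rewrite eq_le near_x ler0n.
  rewrite /f !dot_incidence x_z0 mul0r sub0r normrN ger0_norm ?divr_ge0 ?ler0n //.
  by rewrite ler_pdivlMr // ltW.
have : eps * #|B|%:R <= eps * (eta * #|V|%:R).
  rewrite mulrA; apply: le_trans dist_le.
  apply: le_trans (_ : \sum_(z in B) f z <= _).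
    by rewrite mulr_natr -sumr_const; apply: ler_sum => z; exact: far.
  rewrite [leRHS](bigID [in B]) /= lerDl.
  by apply: sumr_ge0 => z _; exact: normr_ge0.
by rewrite ler_pM2l.
Qed.

End SetSystem.

Lemma exp2_clustering_bound_le (R : realType) (K : nat) (m : R) : (0 < K)%N ->
  K%:R <= 2 * m ->
  (2 ^ ((128 * K ^ 3).+1 * (16 * K ^ 2)))%:R <= 2 `^ (2064 * (2 * m) ^+ 5) :> R.
Proof.
move=> K_gt0 K_le; rewrite natrX -powR_mulrn //; apply: ler_powR; first lra.
have K_ge1 : 1 <= K%:R :> R by rewrite ler1n.
have -> : ((128 * K ^ 3).+1 * (16 * K ^ 2))%:R = 2048 * K%:R ^+ 5 + 16 * K%:R ^+ 2 :> R.
  by rewrite -addn1 !(natrM, natrD, natrX); ring.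
have K5 : K%:R ^+ 5 <= (2 * m) ^+ 5 :> R by rewrite lerXn2r // nnegrE; lra.
have K25 : K%:R ^+ 2 <= K%:R ^+ 5 :> R := ler_weXn2l K_ge1 (isT : (2 <= 5)%N).
lra.
Qed.

Definition clustering_poly (R : realType) : {poly {poly R}} :=
  (66048%:R *: 'X^5)%:P * 'X^5.

Lemma eval2_clustering_poly (R : realType) (a b : R) :
  eval2 (clustering_poly R) a b = 2064 * (2 * (a * b)) ^+ 5.
Proof.
have -> : eval2 (clustering_poly R) a b = 66048%:R * a ^+ 5 * b ^+ 5.
  by rewrite /eval2 !hornerE; ring.
ring.
Qed.

Theorem lemma5p5 (R : realType) :
  exists p : {poly {poly R}},
    forall eps eta : R, 0 < eps <= 1 -> 0 < eta <= 1 ->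
    forall (V : finType) (F : {set {set V}}), F != set0 ->
    exists P : {set {set V}},
      is_clustering F eps eta P /\
      (#|P|%:R : R) <= 2 `^ (eval2 p eps^-1 eta^-1).
Proof.
exists (clustering_poly R).
move=> eps eta /andP[eps_gt0 eps_le1] /andP[eta_gt0 eta_le1] V F F_neq0.
set m := eps^-1 * eta^-1.
have m_ge1 : 1 <= m by rewrite mulr_ege1 // invf_ge1.
have /andP[trunc_le m_lt] := truncn_itv (le_trans ler01 m_ge1).
set K := (Num.truncn m).+1.
have [P [partP closeP cardP]] :=
  exists_gram_clustering (dot_incidence_le1 R F) (ltn0Sn (Num.truncn m)).
exists P; split.
- split=> // X XP x y xX yX; apply: gram_dist_cluster => //.
  apply: le_trans (closeP X XP x y xX yX) _; rewrite mulrC ler_wpM2r //.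
  have -> : eps * eta = m^-1 by rewrite invfM !invrK mulrC.
  by rewrite lef_pV2 ?posrE ?ltW // (lt_le_trans ltr01 m_ge1).
- rewrite eval2_clustering_poly -/m.
  apply: le_trans (_ : _ <= (2 ^ ((128 * K ^ 3).+1 * (16 * K ^ 2)))%:R) _.
    by rewrite ler_nat.
  by apply: exp2_clustering_bound_le => //; rewrite /K -natr1; lra.
Qed.
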